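(* Fix a point with a symmetric positive definite matrix $g_{\alpha\beta}$ ($\alpha,\beta\in\{1,2\}$), $g=\det(g_{\alpha\beta})$, inverse $g^{\alpha\beta}$. Let $P=P(\rho,e)$ be a smooth pressure law, $U=(\rho,v^1,v^2,V^3,e)^T$ with $\rho>0$, $E=e+\tfrac12\left(g_{\alpha\beta}v^\alpha v^\beta+(V^3)^2\right)$, and assume $PP_e+\rho^2P_\rho>0$, $c=\frac{\sqrt{PP_e+\rho^2P_\rho}}{\rho}$. Let $A_0$ be the Jacobian with respect to $U$ of $Q(U)=\big(\rho\sqrt g,\ \rho\sqrt g\,v^1,\ \rho\sqrt g\,v^2,\ \rho\sqrt g\,V^3,\ \rho\sqrt g\,E\big)^T$, and for $\alpha=1,2$ let $A^\alpha$ be the Jacobian with respect to $U$ of $$F^\alpha(U)=\Big(\rho\sqrt g\,v^\alpha,\ \sqrt g[\rho v^1v^\alpha+g^{1\alpha}P],\ \sqrt g[\rho v^2v^\alpha+g^{2\alpha}P],\ \rho\sqrt g\,V^3v^\alpha,\ \sqrt g[\rho E+P]v^\alpha\Big)^T$$ (with $g_{\alpha\beta}$ held fixed). Set $\bar A^\alpha=A_0^{-1}A^\alpha$. For every covector $(w_1,w_2)$ with $g^{\alpha\beta}w_\alpha w_\beta=1$, the eigenvalues of $\bar A_w=w_1\bar A^1+w_2\bar A^2$ are $$v^\alpha w_\alpha,\ v^\alpha w_\alpha,\ v^\alpha w_\alpha,\ v^\alpha w_\alpha+c,\ v^\alpha w_\alpha-c.$$ In particular the pseudo-time-dependent system $A_0U_t+A^1U_{\xi^1}+A^2U_{\xi^2}=0$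 is everywhere non-strictly hyperbolic.
   Context: A first-order system $U_t+\sum_\alpha\bar A^\alpha U_{\xi^\alpha}=0$ is non-strictly hyperbolic if for every unit (co)vector $w$ the eigenvalues of $\sum_\alpha w_\alpha\bar A^\alpha$ are all real but not all distinct. Einstein summation over repeated Greek indices in $\{1,2\}$ is used. The system arises from reinserting (nonphysical) pseudo-time derivatives of the conserved quantities into the steady conical Euler equations on the unit sphere. *)

From HB Require Import structures.
From mathcomp Require Import all_boot all_order all_algebra.
From mathcomp Require Import all_classical all_reals all_analysis.
Set Implicit Arguments. Unset Strict Implicit. Unset Printing Implicit Defensive.
Import Order.TTheory GRing.Theory Num.Theory.
Import numFieldNormedType.Exports.
Local Open Scope ring_scope.

Section Conical.
Variable R : realType.

(* a row vector given by a list of entries (missing entries are 0) *)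
Definition rowl n (s : seq R) : 'rV[R]_n := \row_(j < n) nth 0 s j.

Definition spd2 (g : 'M[R]_2) : Prop :=
  g^T = g /\ forall x : 'rV[R]_2, x != 0 -> 0 < (x *m g *m x^T) 0 0.

(* Usual (column-convention) Jacobian: entry (i,j) = dF_i/dU_j.
   MathComp's 'J uses the row-vector convention, hence the transpose. *)
Definition Jac n m (f : 'rV[R]_n -> 'rV[R]_m) (p : 'rV[R]_n) : 'M[R]_(m, n) :=
  (jacobian f p)^T.

(* U = (rho, v^1, v^2, V^3, e) stored as U 0 0, ..., U 0 4 *)
Definition rhoU (U : 'rV[R]_5) := U 0 0.
Definition v1U (U : 'rV[R]_5) := U 0 1.
Definition v2U (U : 'rV[R]_5) := U 0 2.
Definition V3U (U : 'rV[R]_5) := U 0 3.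
Definition eU (U : 'rV[R]_5) := U 0 4.
(* v^alpha for alpha in {0,1} (i.e. paper's alpha = 1,2) *)
Definition vU (U : 'rV[R]_5) (a : 'I_2) := if a == 0 then v1U U else v2U U.

Definition rho_e (U : 'rV[R]_5) : 'rV[R]_2 := rowl 2 [:: rhoU U; eU U].

Definition Etot (g : 'M[R]_2) (U : 'rV[R]_5) : R :=
  eU U + 2^-1 * (\sum_(a < 2) \sum_(b < 2) g a b * vU U a * vU U b + V3U U ^+ 2).

Definition Qmap (g : 'M[R]_2) (U : 'rV[R]_5) : 'rV[R]_5 :=
  let sg := Num.sqrt (\det g) in
  rowl 5 [:: rhoU U * sg; rhoU U * sg * v1U U; rhoU U * sg * v2U U;
             rhoU U * sg * V3U U; rhoU U * sg * Etot g U].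

Definition Fmap (P : 'rV[R]_2 -> R) (g : 'M[R]_2) (a : 'I_2) (U : 'rV[R]_5)
  : 'rV[R]_5 :=
  let sg := Num.sqrt (\det g) in
  let gi := invmx g in
  let p := P (rho_e U) in
  rowl 5 [:: rhoU U * sg * vU U a;
             sg * (rhoU U * v1U U * vU U a + gi 0 a * p);
             sg * (rhoU U * v2U U * vU U a + gi 1 a * p);
             rhoU U * sg * V3U U * vU U a;
             sg * (rhoU U * Etot g U + p) * vU U a].

Definition Abar P g (a : 'I_2) (U : 'rV[R]_5) : 'M[R]_5 :=
  invmx (Jac (Qmap g) U) *m Jac (Fmap P g a) U.

Definition Abar_w P g (w : 'rV[R]_2) U : 'M[R]_5 :=
  w 0 0 *: Abar P g 0 U + w 0 1 *: Abar P g 1 U.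

Definition ginv_norm2 (g : 'M[R]_2) (w : 'rV[R]_2) : R :=
  (w *m invmx g *m w^T) 0 0.

(* Non-strict hyperbolicity of the system at U: for every unit covector w,
   the eigenvalues (with multiplicity) of Abar_w are all real but not all
   distinct, i.e. its characteristic polynomial splits over R with a repeated
   root. *)
Definition nonstrictly_hyperbolic_at P g U : Prop :=
  forall w : 'rV[R]_2, ginv_norm2 g w = 1 ->
    exists s : seq R, size s = 5%N /\
      char_poly (Abar_w P g w U) = \prod_(l <- s) ('X - l%:P) /\ ~~ uniq s.

End Conical.

From HB Require Import structures.
From mathcomp Require Import all_boot all_order all_algebra.
From mathcomp Require Import all_classical all_reals all_analysis.
From mathcomp Require Import ring.
Import Order.TTheory GRing.Theory Num.Theory.
Import numFieldNormedType.Exports.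
Local Open Scope ring_scope.
Set Implicit Arguments. Unset Strict Implicit. Unset Printing Implicit Defensive.

(* Computing the Jacobians of Q and F^alpha entrywise shows that
   A0 M = w_1 A^1 + w_2 A^2 for an explicit matrix M (the Euler system in
   primitive variables), so Abar_w = M.  An explicit matrix of eigenvectors
   conjugates M to a lower triangular matrix with diagonal
   v.w, v.w, v.w, v.w - c, v.w + c: density, shear and V^3 perturbations are
   carried by the flow, while the normalisation g^{ab} w_a w_b = 1 makes the
   acoustic speeds exactly v.w +- c.  The triple eigenvalue v.w rules out
   strict hyperbolicity. *)

Lemma ord5_ind (P : 'I_5 -> Prop) : P 0 -> P 1 -> P 2 -> P 3 -> P 4 -> forall i, P i.
Proof.
move=> P0 P1 P2 P3 P4 [[|[|[|[|[|//]]]]] Hi];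
  [move: P0 | move: P1 | move: P2 | move: P3 | move: P4]; congr P; exact: val_inj.
Qed.

Lemma ord2_ind (P : 'I_2 -> Prop) : P 0 -> P 1 -> forall i, P i.
Proof. by move=> P0 P1 [[|[|//]] Hi]; [move: P0 | move: P1]; congr P; exact: val_inj. Qed.

Section EulerMatrices.
Variable F : fieldType.

Lemma char_poly_similar n (M L S : 'M[F]_n) : S \in unitmx -> M *m S = S *m L ->
  char_poly M = char_poly L.
Proof.
move=> uS MS.
have H : char_poly_mx M *m map_mx polyC S = map_mx polyC S *m char_poly_mx L.
  by rewrite /char_poly_mx mulmxBl mulmxBr -!map_mxM MS mul_scalar_mx mul_mx_scalar.
have := congr1 determinant H; rewrite !det_mulmx det_map_mx mulrC.
by apply: mulfI; rewrite polyC_eq0 -unitfE -unitmxE.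
Qed.

(* Lets [field] prove identities that only hold on the constraint [x = y]:
   supply the multiplier [k] of [x - y]. *)
Lemma eq_modulo (k x y a b : F) : x = y -> a - b = k * (x - y) -> a = b.
Proof. by move=> ->; rewrite subrr mulr0 => /subr0_eq. Qed.
Arguments eq_modulo k {x y a b}.

Definition mx_of_rows n (l : seq (seq F)) : 'M[F]_n :=
  \matrix_(i, j) nth 0 (nth [::] l i) j.

(* Abar_w in primitive variables (rho, v^1, v^2, V^3, e), with [r = rho],
   [vw = v^a w_a], [u = g^{-1} w], [p] the pressure and [Pr], [Pe] its partial
   derivatives. *)
Definition euler_mx (r vw w0 w1 u0 u1 Pr Pe p : F) : 'M[F]_5 := mx_of_rows 5
  [:: [:: vw; r * w0; r * w1; 0; 0];
      [:: u0 * Pr / r; vw; 0; 0; u0 * Pe / r];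
      [:: u1 * Pr / r; 0; vw; 0; u1 * Pe / r];
      [:: 0; 0; 0; vw; 0];
      [:: 0; p / r * w0; p / r * w1; 0; vw]].

Lemma char_poly_euler_mx (r vw w0 w1 u0 u1 Pr Pe p c : F) :
  r != 0 -> w0 * u0 + w1 * u1 = 1 -> c * c = Pr + p * Pe / (r * r) ->
  char_poly (euler_mx r vw w0 w1 u0 u1 Pr Pe p) =
    \prod_(l <- [:: vw; vw; vw; vw + c; vw - c]) ('X - l%:P).
Proof.
move=> r0 wu1 cc.
set X := w0 * u0 + w1 * u1.
(* In the basis given by the columns of S, M becomes the lower triangular L
   once X = 1 and c^2 = Pr + p Pe / r^2; the last column of S is the acoustic
   eigenvector for vw + c, and T is the inverse of S. *)
pose S := mx_of_rows 5
  [:: [:: 0; 0; 0; 0; r];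
      [:: 0; - w1; 0; u0; c * u0];
      [:: 0; w0; 0; u1; c * u1];
      [:: 1; 0; 0; 0; 0];
      [:: 0; 0; 1; 0; p / r]].
pose T := mx_of_rows 5
  [:: [:: 0; 0; 0; 1; 0];
      [:: 0; - u1; u0; 0; 0];
      [:: - (p / (r * r)); 0; 0; 0; 1];
      [:: - (c * X / r); w0; w1; 0; 0];
      [:: r^-1; 0; 0; 0; 0]].
pose L := mx_of_rows 5
  [:: [:: vw; 0; 0; 0; 0];
      [:: 0; vw; 0; 0; 0];
      [:: 0; 0; vw; 0; 0];
      [:: 0; 0; Pe / r; vw - c * X; Pr + p * Pe / (r * r) - c * c * X];
      [:: 0; 0; 0; X; vw + c * X]].
have TS : T *m S = 1%:M.
  apply/matrixP => i j; rewrite !mxE !big_ord_recl !big_ord0 !mxE.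
  by elim/ord5_ind: i; elim/ord5_ind: j; rewrite /= /X;
    first [field | apply: (eq_modulo 1 wu1); field].
have uS : S \in unitmx by case/mulmx1_unit: TS.
have MS : euler_mx r vw w0 w1 u0 u1 Pr Pe p *m S = S *m L.
  apply/matrixP => i j; rewrite !mxE !big_ord_recl !big_ord0 !mxE.
  by elim/ord5_ind: i; elim/ord5_ind: j; rewrite /= /X; field.
have trigL : is_trig_mx L.
  apply/is_trig_mxP => i j; rewrite !mxE.
  by elim/ord5_ind: i; elim/ord5_ind: j => //= _; rewrite /X wu1 cc; field.
rewrite (char_poly_similar uS MS) char_poly_trig //.
rewrite !big_ord_recl !big_ord0 !big_cons big_nil !mxE /= /X wu1 !mulr1.
ring.
Qed.

(* A0 / sqrt g and A^alpha / sqrt g, with [Ga = g_{ab} v^b], [E] the total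
   energy, [k = e_alpha], [va = v^alpha] and [gi1], [gi2] the column
   g^{. alpha}. *)
Definition A0_mx (r a b s E Ga Gb : F) : 'M[F]_5 := mx_of_rows 5
  [:: [:: 1; 0; 0; 0; 0];
      [:: a; r; 0; 0; 0];
      [:: b; 0; r; 0; 0];
      [:: s; 0; 0; r; 0];
      [:: E; r * Ga; r * Gb; r * s; r]].

Definition flux_mx (r a b s E Ga Gb Pr Pe p k1 k2 va gi1 gi2 : F) : 'M[F]_5 :=
  mx_of_rows 5
  [:: [:: va; r * k1; r * k2; 0; 0];
      [:: a * va + gi1 * Pr; r * va + r * a * k1; r * a * k2; 0; gi1 * Pe];
      [:: b * va + gi2 * Pr; r * b * k1; r * va + r * b * k2; 0; gi2 * Pe];
      [:: s * va; r * s * k1; r * s * k2; r * va; 0];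
      [:: (E + Pr) * va; r * Ga * va + (r * E + p) * k1;
          r * Gb * va + (r * E + p) * k2; r * s * va; (r + Pe) * va]].

Lemma A0_mx_euler_mx (r a b s E Ga Gb Pr Pe p w0 w1 gi11 gi12 gi21 gi22 : F) :
  r != 0 ->
  let u0 := gi11 * w0 + gi12 * w1 in let u1 := gi21 * w0 + gi22 * w1 in
  Ga * u0 + Gb * u1 = a * w0 + b * w1 ->
  A0_mx r a b s E Ga Gb *m euler_mx r (a * w0 + b * w1) w0 w1 u0 u1 Pr Pe p =
    w0 *: flux_mx r a b s E Ga Gb Pr Pe p 1 0 a gi11 gi21
  + w1 *: flux_mx r a b s E Ga Gb Pr Pe p 0 1 b gi12 gi22.
Proof.
move=> r0 u0 u1; rewrite {}/u0 {}/u1 => Gu.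
apply/matrixP => i j; rewrite !mxE !big_ord_recl !big_ord0 !mxE.
by elim/ord5_ind: i; elim/ord5_ind: j; rewrite /=;
  first [ field | apply: (eq_modulo Pr Gu); field | apply: (eq_modulo Pe Gu); field ].
Qed.

Lemma A0_mx_unit (r a b s E Ga Gb : F) : r != 0 -> A0_mx r a b s E Ga Gb \in unitmx.
Proof.
move=> r0; rewrite unitmxE unitfE det_trig; last first.
  by apply/is_trig_mxP => i j; rewrite !mxE; elim/ord5_ind: i; elim/ord5_ind: j.
by rewrite !big_ord_recl big_ord0 !mxE /= !mul1r mulr1 !mulf_neq0.
Qed.

Lemma quad_form2 (M : 'M[F]_2) (x : 'rV[F]_2) : (x *m M *m x^T) 0 0 =
  x 0 0 * (x 0 0 * M 0 0 + x 0 1 * M 1 0) + x 0 1 * (x 0 0 * M 0 1 + x 0 1 * M 1 1).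
Proof.
rewrite !mxE !big_ord_recl !big_ord0 !mxE !big_ord_recl !big_ord0.
by rewrite (_ : lift ord0 ord0 = 1) /=; [ring | exact: val_inj].
Qed.

Lemma det_mx22 (M : 'M[F]_2) : \det M = M 0 0 * M 1 1 - M 0 1 * M 1 0.
Proof.
rewrite (expand_det_row M 0) !big_ord_recl big_ord0 /cofactor !det_mx11 !mxE /=.
rewrite (_ : lift ord0 ord0 = 1); last exact: val_inj.
rewrite (_ : lift 1 ord0 = 0); last exact: val_inj.
by rewrite expr0 expr1 mul1r mulN1r addr0 mulrN.
Qed.

Lemma invmx22 (M : 'M[F]_2) : M \in unitmx ->
  [/\ invmx M 0 0 = M 1 1 / \det M, invmx M 0 1 = - M 0 1 / \det M,
      invmx M 1 0 = - M 1 0 / \det M & invmx M 1 1 = M 0 0 / \det M].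
Proof.
move=> uM; rewrite /invmx uM !mxE /cofactor !det_mx11 !mxE /=.
rewrite (_ : lift ord0 ord0 = 1); last exact: val_inj.
rewrite (_ : lift 1 ord0 = 0); last exact: val_inj.
rewrite (expr0 (-1)) (expr1 (-1)) (_ : (1 %% 2 + 1 %% 2 = 2)%N) // sqrrN expr1n.
by split; rewrite mulrC ?mul1r ?mulN1r.
Qed.

End EulerMatrices.

Section Differentiation.
Variable R : realType.

Lemma Jac_coord n m (f : 'rV[R]_n -> 'rV[R]_m) p i j : differentiable f p ->
  Jac f p i j = 'D_(delta_mx 0 j) (fun x => f x 0 i) p.
Proof.
move=> df.
have @c : {linear 'rV[R]_m -> R}.
  by exists (fun N : 'rV[R]_m => N 0 i); do 2![eexists]; do ?[constructor];
     rewrite ?mxE// => ? *; rewrite ?mxE//; move=> ?; rewrite !mxE.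
have cc : continuous c by exact: coord_continuous.
have -> : (fun x => f x 0 i) = c \o f by [].
rewrite deriveE; last exact: differentiable_comp (linear_differentiable _ cc).
rewrite diff_comp //; last exact: linear_differentiable.
by rewrite diff_lin //= -deriveE // deriveEjacobian // -rowE /Jac !mxE.
Qed.

Lemma differentiable_row n m (f : 'rV[R]_n -> 'rV[R]_m) p :
  (forall i, differentiable (fun x => f x 0 i) p) -> differentiable f p.
Proof.
move=> H; have -> : f = \sum_(i < m) (fun x => f x 0 i *: delta_mx 0 i).
  by apply: funext => x; rewrite fct_sumE -row_sum_delta.
by apply: differentiable_sum => i; exact: differentiableZl.
Qed.

Lemma rowl_coord n m (s : 'rV[R]_n -> seq R) i :
  (fun x => rowl m (s x) 0 i) = (fun x => nth 0 (s x) i).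
Proof. by apply: funext => x; rewrite mxE. Qed.

Lemma is_derive_comp_linear (V1 V2 W : normedModType R) (f : V2 -> W)
    (L : V1 -> V2) a v :
  (forall h : R, L (h *: v + a) = h *: L v + L a) -> derivable f (L a) (L v) ->
  is_derive a v (fun y => f (L y)) ('D_(L v) f (L a)).
Proof.
move=> Lline df.
have E : (fun h : R => h^-1 *: (((fun y => f (L y)) \o shift a) (h *: v) - f (L a)))
   = (fun h => h^-1 *: ((f \o shift (L a)) (h *: L v) - f (L a))).
  by apply: funext => h /=; rewrite Lline.
by split; rewrite /derivable /derive E.
Qed.

Lemma is_derive_coord n (x v : 'rV[R]_n) k :
  is_derive x v (fun y : 'rV[R]_n => y 0 k) (v 0 k).
Proof.
have := @is_derive_comp_linear _ _ _ id (fun y : 'rV[R]_n => y 0 k) x v.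
by rewrite derive_id; apply; [move=> h; rewrite !mxE | exact: derivable_id].
Qed.

(* Variants of library lemmas usable by the tactics below: derive_val takes
   its hypothesis as an instance (which erewrite would shelve), and
   is_deriveM, is_deriveD, differentiableM, differentiableD are stated for
   [f * g], [f + g] rather than for lambda-terms. *)
Lemma derive_is_derive (V W : normedModType R) (f : V -> W) x v df :
  is_derive x v f df -> 'D_v f x = df.
Proof. by move=> fx; rewrite derive_val. Qed.

Lemma is_derive_mul n (x v : 'rV[R]_n) (f g : 'rV[R]_n -> R) df dg :
  is_derive x v f df -> is_derive x v g dg ->
  is_derive x v (fun y => f y * g y) (f x * dg + g x * df).
Proof. exact: is_deriveM. Qed.

Lemma is_derive_add n (x v : 'rV[R]_n) (f g : 'rV[R]_n -> R) df dg :
  is_derive x v f df -> is_derive x v g dg ->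
  is_derive x v (fun y => f y + g y) (df + dg).
Proof. exact: is_deriveD. Qed.

Lemma differentiable_mul n (x : 'rV[R]_n) (f g : 'rV[R]_n -> R) :
  differentiable f x -> differentiable g x -> differentiable (fun y => f y * g y) x.
Proof. exact: differentiableM. Qed.

Lemma differentiable_add n (x : 'rV[R]_n) (f g : 'rV[R]_n -> R) :
  differentiable f x -> differentiable g x -> differentiable (fun y => f y + g y) x.
Proof. exact: differentiableD. Qed.

Lemma rho_eE (y : 'rV[R]_5) :
  rho_e y = y 0 0 *: delta_mx 0 0 + y 0 4 *: delta_mx 0 1.
Proof.
apply/rowP => j; rewrite !mxE /rhoU /eU.
by case: j => [[|[|j]] Hj] //=; rewrite ?mulr1 ?mulr0 ?addr0 ?add0r.
Qed.

Lemma is_derive_pressure (P : 'rV[R]_2 -> R) x v :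
  differentiable P (rho_e x) ->
  is_derive x v (fun y => P (rho_e y))
    (v 0 0 * 'D_(delta_mx 0 0) P (rho_e x) + v 0 4 * 'D_(delta_mx 0 1) P (rho_e x)).
Proof.
move=> dP; apply: is_derive_eq.
  apply: (@is_derive_comp_linear _ _ _ P (@rho_e R)); last exact: diff_derivable.
  by move=> h; rewrite !rho_eE !mxE !scalerDr !scalerA !scalerDl addrACA.
by rewrite !deriveE // (rho_eE v) linearD !linearZ.
Qed.

Lemma differentiable_pressure (P : 'rV[R]_2 -> R) x :
  differentiable P (rho_e x) -> differentiable (fun y => P (rho_e y)) x.
Proof.
move=> dP; apply: (@differentiable_comp _ _ _ _ (@rho_e R) P) => //.
have -> : @rho_e R = (fun y => y 0 0 *: delta_mx 0 0) + (fun y => y 0 4 *: delta_mx 0 1).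
  by apply: funext => y; rewrite rho_eE.
by apply: differentiableD; apply: differentiableZl; apply: differentiable_coord.
Qed.

End Differentiation.

Ltac solve_is_derive dP := repeat first
  [ eapply is_derive_cst | eapply is_derive_coord
  | eapply is_derive_pressure; exact: dP
  | eapply is_derive_mul | eapply is_derive_add ].

Ltac solve_differentiable dP := repeat first
  [ eapply differentiable_cst | eapply differentiable_coord
  | eapply differentiable_pressure; exact: dP
  | eapply differentiable_mul | eapply differentiable_add ].

Section FluxJacobians.
Variables (R : realType) (g : 'M[R]_2).
Hypothesis gsym : g^T = g.

Definition vcov (U : 'rV[R]_5) (a : 'I_2) : R := g a 0 * v1U U + g a 1 * v2U U.

Lemma EtotE : Etot g = fun x => x 0 4 + 2^-1 * (g 0 0 * x 0 1 * x 0 1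
  + g 0 1 * x 0 1 * x 0 2 + (g 1 0 * x 0 2 * x 0 1 + g 1 1 * x 0 2 * x 0 2)
  + x 0 3 * x 0 3).
Proof.
apply: funext => x; rewrite /Etot !big_ord_recl !big_ord0 /vU /=.
by rewrite (_ : lift ord0 ord0 = 1); [rewrite !addr0 expr2 | exact: val_inj].
Qed.

Lemma differentiable_Qmap U : differentiable (Qmap g) U.
Proof.
apply: differentiable_row => i; rewrite /Qmap EtotE /= rowl_coord.
by elim/ord5_ind: i => /=; solve_differentiable tt.
Qed.

Lemma Jac_Qmap U : Jac (Qmap g) U = Num.sqrt (\det g) *:
  A0_mx (rhoU U) (v1U U) (v2U U) (V3U U) (Etot g U) (vcov U 0) (vcov U 1).
Proof.
have g10 : g 1 0 = g 0 1 by rewrite -{1}gsym mxE.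
apply/matrixP => i j; rewrite Jac_coord; last exact: differentiable_Qmap.
rewrite /Qmap EtotE /rhoU /v1U /v2U /V3U /eU /= rowl_coord.
elim/ord5_ind: i => /=; (erewrite derive_is_derive; [|solve_is_derive tt]);
  by elim/ord5_ind: j; rewrite !mxE /= /vcov /v1U /v2U ?g10; field.
Qed.

Lemma differentiable_Fmap P a U :
  differentiable P (rho_e U) -> differentiable (Fmap P g a) U.
Proof.
move=> dP; apply: differentiable_row => i.
rewrite /Fmap EtotE /rhoU /v1U /v2U /V3U /eU /= rowl_coord.
by elim/ord2_ind: a; elim/ord5_ind: i => /=; solve_differentiable dP.
Qed.

Lemma Jac_Fmap P a U : differentiable P (rho_e U) ->
  Jac (Fmap P g a) U = Num.sqrt (\det g) *:
  flux_mx (rhoU U) (v1U U) (v2U U) (V3U U) (Etot g U) (vcov U 0) (vcov U 1)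
    ('D_(delta_mx 0 0) P (rho_e U)) ('D_(delta_mx 0 1) P (rho_e U)) (P (rho_e U))
    (a == 0)%:R (a == 1)%:R (vU U a) (invmx g 0 a) (invmx g 1 a).
Proof.
move=> dP; have g10 : g 1 0 = g 0 1 by rewrite -{1}gsym mxE.
apply/matrixP => i j; rewrite Jac_coord; last exact: differentiable_Fmap.
rewrite /Fmap EtotE /vU /rhoU /v1U /v2U /V3U /eU /= rowl_coord.
elim/ord2_ind: a => /=; elim/ord5_ind: i => /=;
  (erewrite derive_is_derive; [|solve_is_derive dP]);
  by elim/ord5_ind: j; rewrite !mxE /= /vcov /v1U /v2U ?g10; field.
Qed.

End FluxJacobians.

Section Reduction.
Variables (R : realType) (g : 'M[R]_2).
Hypothesis gsym : g^T = g.

Lemma Abar_w_euler_mx P w U :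
  0 < \det g -> rhoU U != 0 -> differentiable P (rho_e U) ->
  Abar_w P g w U = euler_mx (rhoU U) (vU U 0 * w 0 0 + vU U 1 * w 0 1) (w 0 0) (w 0 1)
    (invmx g 0 0 * w 0 0 + invmx g 0 1 * w 0 1)
    (invmx g 1 0 * w 0 0 + invmx g 1 1 * w 0 1)
    ('D_(delta_mx 0 0) P (rho_e U)) ('D_(delta_mx 0 1) P (rho_e U)) (P (rho_e U)).
Proof.
move=> det_gt0 r0 dP; have g10 : g 1 0 = g 0 1 by rewrite -{1}gsym mxE.
set sg := Num.sqrt (\det g); set M := euler_mx _ _ _ _ _ _ _ _ _.
have sg_unit : sg \is a GRing.unit by rewrite unitfE sqrtr_eq0 -ltNge.
have uA0 : Jac (Qmap g) U \in unitmx by rewrite (Jac_Qmap gsym) unitmxZ // A0_mx_unit.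
have A0M : Jac (Qmap g) U *m M = w 0 0 *: Jac (Fmap P g 0) U + w 0 1 *: Jac (Fmap P g 1) U.
  rewrite (Jac_Qmap gsym) !(Jac_Fmap gsym) //= -scalemxAl A0_mx_euler_mx //.
    by rewrite scalerDr !scalerA [sg * w 0 0]mulrC [sg * w 0 1]mulrC.
  have ug : g \in unitmx by rewrite unitmxE unitfE gt_eqF.
  have det_neq0 : g 0 0 * g 1 1 - g 0 1 * g 0 1 != 0.
    by rewrite (_ : _ - _ = \det g) ?gt_eqF // det_mx22 g10.
  case: (invmx22 ug) => -> -> -> ->.
  by rewrite /vcov det_mx22 g10; field.
by rewrite /Abar_w /Abar !scalemxAr -mulmxDr -A0M mulKmx.
Qed.

End Reduction.

Lemma spd2_det_gt0 (R : realType) (g : 'M[R]_2) : spd2 g -> 0 < \det g.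
Proof.
case=> gsym gpos; have g10 : g 1 0 = g 0 1 by rewrite -{1}gsym mxE.
have e0_neq0 : delta_mx 0 0 != 0 :> 'rV[R]_2.
  by apply/negP => /eqP/matrixP/(_ 0 0); rewrite !mxE /= => /eqP; rewrite oner_eq0.
have g00 : 0 < g 0 0.
  by have := gpos _ e0_neq0; rewrite quad_form2 !mxE /= !mul1r !mul0r !addr0.
pose x : 'rV[R]_2 := \row_j (if j == 0 then g 0 1 else - g 0 0).
have x_neq0 : x != 0.
  by apply/negP => /eqP/matrixP/(_ 0 1); rewrite !mxE /= => /eqP; rewrite oppr_eq0 gt_eqF.
rewrite det_mx22 g10 -(pmulr_rgt0 _ g00).
by have := gpos x x_neq0; rewrite quad_form2 !mxE /= g10; congr (0 < _); ring.
Qed.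

Unset Implicit Arguments.

Theorem mainTheorem4 (R : realType) (g : 'M[R]_2) (P : 'rV[R]_2 -> R)
  (U : 'rV[R]_5) :
  spd2 g ->
  (forall x : 'rV[R]_2, 0 < x 0 0 -> differentiable P x) ->
  0 < rhoU U ->
  let Prho := 'D_(delta_mx 0 0) P (rho_e U) in
  let Pe := 'D_(delta_mx 0 1) P (rho_e U) in
  let p := P (rho_e U) in
  0 < p * Pe + rhoU U ^+ 2 * Prho ->
  let c := Num.sqrt (p * Pe + rhoU U ^+ 2 * Prho) / rhoU U in
  (forall w : 'rV[R]_2, ginv_norm2 g w = 1 ->
     let vw := vU U 0 * w 0 0 + vU U 1 * w 0 1 in
     char_poly (Abar_w P g w U) =
       \prod_(l <- [:: vw; vw; vw; vw + c; vw - c]) ('X - l%:P))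
  /\ nonstrictly_hyperbolic_at P g U.
Proof.
move=> gspd HPd r_gt0 Prho Pe p K_gt0 c.
have gsym : g^T = g by case: gspd.
have dP : differentiable P (rho_e U) by apply: HPd; rewrite mxE.
have r_neq0 : rhoU U != 0 by rewrite gt_eqF.
have cc : c * c = Prho + p * Pe / (rhoU U * rhoU U).
  by rewrite /c -expr2 expr_div_n sqr_sqrtr ?ltW //; field.
have spectrum w : ginv_norm2 g w = 1 ->
    let vw := vU U 0 * w 0 0 + vU U 1 * w 0 1 in
    char_poly (Abar_w P g w U) =
      \prod_(l <- [:: vw; vw; vw; vw + c; vw - c]) ('X - l%:P).
  move=> w_unit vw.
  rewrite (Abar_w_euler_mx gsym) ?spd2_det_gt0 //; apply: char_poly_euler_mx => //.
  by rewrite -w_unit /ginv_norm2 quad_form2; ring.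
split=> // w w_unit; set vw := vU U 0 * w 0 0 + vU U 1 * w 0 1.
exists [:: vw; vw; vw; vw + c; vw - c]; split=> //; split; first exact: spectrum.
by rewrite /= inE eqxx.
Qed.
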